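(* Let $M$ be a graded quasi-primaryful $R$-module. Then for every graded submodule $K$ of $M$, $$\varphi(qp\text{-}V_M^g(K))=V_{\overline R}^g\big(\overline{Gr((K:_RM))}\big)$$ and $$\varphi\big(qp.Spec_g(M)\setminus qp\text{-}V_M^g(K)\big)=Spec_g(\overline R)\setminus V_{\overline R}^g\big(\overline{Gr((K:_RM))}\big);$$ i.e., $\varphi$ is both closed and open.
   Context: $R=\bigoplus_{g\in G}R_g$ is a graded commutative ring with identity graded by a group $G$, $h(R)=\bigcup_g R_g$; $M$ is a graded $R$-module, $h(M)$ its homogeneous elements. $Gr(I)$ is the graded radical of a graded ideal $I$. $Spec_g(R)$: graded prime ideals. $(K:_RM)=\{r: rM\subseteq K\}$. Graded prime submodule: proper graded $P$ with $rm\in P$ ($r\in h(R), m\in h(M)$) implying $m\in P$ or $r\in(P:_RM)$. $Gr_M(K)$: intersection of graded prime submodules containing $K$ ($M$ if none). Graded primeful property of $K$: for each graded prime $p\supseteq(K:_RM)$ there is a graded prime submodule $P\supseteq K$ with $(P:_RM)=p$. Graded quasi-primary submodule: proper graded $Q$ with $rm\in Q$ ($r\in h(R),m\in h(M)$) implying $r\in Gr((Q:_RM))$ or $m\in Gr_M(Q)$. $qp.Spec_g(M)$: graded quasi-primary submodules with the graded primeful property. $qp\text{-}V_M^g(K)=\{Q\in qp.Spec_g(M): Gr((Q:_RM))\supseteq Gr((K:_RM))\}$; these are the closed sets of the quasi-Zariski topology. $\overline R=R/\mathrm{Ann}(M)$, $\overline I=I/\mathrm{Ann}(M)$; $V_{\overline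 R}^g(\overline I)$ is the set of graded prime ideals of $\overline R$ containing $\overline I$ (Zariski closed sets of $Spec_g(\overline R)$). Natural map $\varphi:qp.Spec_g(M)\to Spec_g(\overline R)$, $\varphi(Q)=\overline{(Gr_M(Q):_RM)}=\overline{Gr((Q:_RM))}$. A graded quasi-primary ideal of $R$ is a proper graded ideal $q$ with $ab\in q$ ($a,b\in h(R)$) implying $a\in Gr(q)$ or $b\in Gr(q)$. $M$ is graded quasi-primaryful if $M=0$, or $M\neq0$ and for every graded quasi-primary ideal $q$ of $R$ containing $\mathrm{Ann}(M)$ there exists $Q\in qp.Spec_g(M)$ with $Gr((Q:_RM))=Gr(q)$. *)

From HB Require Import structures.
From mathcomp Require Import all_boot all_order all_algebra.


Set Implicit Arguments.
Unset Strict Implicit.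
Unset Printing Implicit Defensive.

Import GRing.Theory.
Local Open Scope ring_scope.

Section Graded.

Variables (G : groupType) (R : comPzRingType) (M : lmodType R).

Definition direct_decomposition (V : zmodType) (C : G -> V -> Prop) : Prop :=
  [/\ (forall g, C g 0),
      (forall g x y, C g x -> C g y -> C g (x - y)),
      (forall v, exists (s : seq G) (x : G -> V),
          [/\ uniq s, (forall g, C g (x g)) & v = \sum_(g <- s) x g]) &
      (forall (s : seq G) (x : G -> V), uniq s -> (forall g, C g (x g)) ->
          \sum_(g <- s) x g = 0 -> forall g, g \in s -> x g = 0)].

Definition ring_grading (Rg : G -> R -> Prop) : Prop :=
  direct_decomposition Rg /\
  (forall g h a b, Rg g a -> Rg h b -> Rg (g * h)%g (a * b)).

Definition module_grading (Rg : G -> R -> Prop) (Mg : G -> M -> Prop) : Prop :=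
  direct_decomposition Mg /\
  (forall g h a m, Rg g a -> Mg h m -> Mg (g * h)%g (a *: m)).

Variables (Rg : G -> R -> Prop) (Mg : G -> M -> Prop).

Definition homR (a : R) : Prop := exists g, Rg g a.
Definition homM (m : M) : Prop := exists g, Mg g m.

Definition ideal (I : R -> Prop) : Prop :=
  [/\ I 0, (forall x y, I x -> I y -> I (x + y)) &
      (forall r x, I x -> I (r * x))].

Definition proper_ideal (I : R -> Prop) : Prop := exists r, ~ I r.

Definition graded_ideal (I : R -> Prop) : Prop :=
  ideal I /\
  (forall r, I r -> exists (s : seq G) (x : G -> R),
      [/\ uniq s, (forall g, Rg g (x g) /\ I (x g)) & r = \sum_(g <- s) x g]).

Definition Gr (I : R -> Prop) : R -> Prop := fun r =>
  exists (s : seq G) (x : G -> R),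
    [/\ uniq s, (forall g, Rg g (x g)), r = \sum_(g <- s) x g &
        forall g, g \in s -> exists n : nat, I (x g ^+ n.+1)].

Definition graded_prime_ideal (P : R -> Prop) : Prop :=
  [/\ graded_ideal P, proper_ideal P &
      forall a b, homR a -> homR b -> P (a * b) -> P a \/ P b].

Definition graded_quasi_primary_ideal (q : R -> Prop) : Prop :=
  [/\ graded_ideal q, proper_ideal q &
      forall a b, homR a -> homR b -> q (a * b) -> Gr q a \/ Gr q b].

Definition submodule (N : M -> Prop) : Prop :=
  [/\ N 0, (forall x y, N x -> N y -> N (x + y)) &
      (forall (r : R) x, N x -> N (r *: x))].

Definition proper_submodule (N : M -> Prop) : Prop := exists m, ~ N m.

Definition graded_submodule (N : M -> Prop) : Prop :=
  submodule N /\
  (forall m, N m -> exists (s : seq G) (x : G -> M),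
      [/\ uniq s, (forall g, Mg g (x g) /\ N (x g)) & m = \sum_(g <- s) x g]).

Definition colon (K : M -> Prop) : R -> Prop := fun r => forall m, K (r *: m).

Definition Ann : R -> Prop := fun r => forall m : M, r *: m = 0.

Definition graded_prime_submodule (P : M -> Prop) : Prop :=
  [/\ graded_submodule P, proper_submodule P &
      forall r m, homR r -> homM m -> P (r *: m) -> P m \/ colon P r].

(* Gr_M(K): intersection of all graded prime submodules containing K
   (= M when there is none). *)
Definition GrM (K : M -> Prop) : M -> Prop := fun m =>
  forall P, graded_prime_submodule P -> (forall x, K x -> P x) -> P m.

Definition graded_primeful (K : M -> Prop) : Prop :=
  forall p : R -> Prop, graded_prime_ideal p -> (forall r, colon K r -> p r) ->
    exists P : M -> Prop, [/\ graded_prime_submodule P, (forall x, K x -> P x) &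
                              forall r, colon P r <-> p r].

Definition graded_quasi_primary_submodule (Q : M -> Prop) : Prop :=
  [/\ graded_submodule Q, proper_submodule Q &
      forall r m, homR r -> homM m -> Q (r *: m) -> Gr (colon Q) r \/ GrM Q m].

Definition qpSpec (Q : M -> Prop) : Prop :=
  graded_quasi_primary_submodule Q /\ graded_primeful Q.

Definition qpV (K : M -> Prop) (Q : M -> Prop) : Prop :=
  qpSpec Q /\ (forall r, Gr (colon K) r -> Gr (colon Q) r).

Definition graded_quasi_primaryful : Prop :=
  (forall m : M, m = 0) \/
  ((exists m : M, m <> 0) /\
   forall q : R -> Prop, graded_quasi_primary_ideal q -> (forall r, Ann r -> q r) ->
     exists Q, qpSpec Q /\ forall r, Gr (colon Q) r <-> Gr q r).

(* ---------- Spec_g(R/Ann(M)) via the correspondence theorem ----------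
   A graded prime ideal of Rbar = R/Ann(M) is represented by its preimage in R,
   i.e. a graded prime ideal p of R with Ann(M) <= p.  Under this
   identification bar(I) <= bar(p) iff I <= p (for I >= Ann(M)), and the
   natural map is  phi(Q) = bar(Gr((Q:_R M)))  ~  Gr((Q :_R M)). *)
Definition SpecRbar (p : R -> Prop) : Prop :=
  graded_prime_ideal p /\ (forall r, Ann r -> p r).

Definition VRbar (I : R -> Prop) (p : R -> Prop) : Prop :=
  SpecRbar p /\ (forall r, I r -> p r).

Definition phi (Q : M -> Prop) : R -> Prop := Gr (colon Q).

Definition in_phi_image (F : (M -> Prop) -> Prop) (p : R -> Prop) : Prop :=
  exists Q, F Q /\ forall r, phi Q r <-> p r.

End Graded.
Arguments homR {G R} Rg a.
Arguments homM {G R M} Mg m.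

(* For Q in qp.Spec_g(M), Gr((Q :_R M)) is a graded prime ideal containing Ann(M): if a b lies
   in it and a does not, quasi-primarity puts b^n M inside Gr_M(Q), and graded prime avoidance
   together with the primeful property of Q turns this into b in Gr((Q :_R M)).  Conversely a
   graded prime p over Ann(M) is graded quasi-primary with Gr(p) = p, so quasi-primaryfulness
   makes phi onto Spec_g(R/Ann(M)).  As qp-V(K) and its complement are cut out of qp.Spec_g(M)
   by a condition on phi(Q) alone, their images are V(Gr((K :_R M))) and its complement. *)

From mathcomp Require Import all_boot all_order all_algebra.
From mathcomp Require Import zify ring.
From mathcomp Require Import boolp classical_sets.

Set Implicit Arguments.
Unset Strict Implicit.
Unset Printing Implicit Defensive.
Import GRing.Theory.
Local Open Scope ring_scope.

Section DirectDecomposition.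
Variables (G : groupType) (V : zmodType) (C : G -> V -> Prop).
Hypothesis hC : direct_decomposition C.

Lemma homog0 g : C g 0.
Proof. by case: hC. Qed.

Lemma homogB g x y : C g x -> C g y -> C g (x - y).
Proof. by case: hC => _ hB _ _; apply: hB. Qed.

Lemma homogN g x : C g x -> C g (- x).
Proof. by move=> Cx; rewrite -sub0r; apply: homogB => //; apply: homog0. Qed.

Lemma homogD g x y : C g x -> C g y -> C g (x + y).
Proof. by move=> Cx Cy; rewrite -[y]opprK; apply: homogB => //; apply: homogN. Qed.

Lemma homog_regroup (Pr : V -> Prop) : Pr 0 -> (forall x y, Pr x -> Pr y -> Pr (x + y)) ->
  forall l : seq (G * V), (forall i, i \in l -> C i.1 i.2 /\ Pr i.2) ->
  exists (s : seq G) (x : G -> V),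
    [/\ uniq s, (forall g, C g (x g) /\ Pr (x g)) & \sum_(i <- l) i.2 = \sum_(g <- s) x g].
Proof.
move=> Pr0 PrD l hl; pose x g := \sum_(i <- l | g == i.1) i.2.
exists (undup (map fst l)), x; split; first exact: undup_uniq.
  move=> g; rewrite /x big_seq_cond.
  have comp_g i : (i \in l) && (g == i.1) -> C g i.2 /\ Pr i.2.
    by case/andP => /hl + /eqP ->.
  split; apply: big_ind => //; [exact: homog0 | exact: homogD | | ];
    by move=> i /comp_g[].
rewrite (exchange_big_dep xpredT) //=; apply: eq_big_seq => i li.
rewrite -big_filter (filter_pred1_uniq (undup_uniq _)) ?big_seq1 //.
by rewrite mem_undup map_f.
Qed.

Lemma homog_components_unique (s t : seq G) (x y : G -> V) : uniq s -> uniq t ->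
  (forall g, C g (x g)) -> (forall g, C g (y g)) ->
  \sum_(g <- s) x g = \sum_(g <- t) y g ->
  forall g, g \in s -> x g = if g \in t then y g else 0.
Proof.
move=> us ut Cx Cy e.
pose u := undup (s ++ t).
have sum_over_u (w : seq G) (z : G -> V) : uniq w -> {subset w <= u} ->
    \sum_(g <- w) z g = \sum_(g <- u) (if g \in w then z g else 0).
  move=> uw sw; rewrite -big_mkcond -big_filter; apply: perm_big.
  apply: uniq_perm => //; first by rewrite filter_uniq // undup_uniq.
  by move=> g; rewrite mem_filter; case wg: (g \in w) => //=; rewrite sw.
have su : {subset s <= u} by move=> g sg; rewrite mem_undup mem_cat sg.
have tu : {subset t <= u} by move=> g tg; rewrite mem_undup mem_cat tg orbT.
pose X g := (if g \in s then x g else 0) - (if g \in t then y g else 0).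
have CX g : C g (X g).
  by apply: homogB; case: ifP => _; by [apply: Cx | apply: Cy | apply: homog0].
have sX : \sum_(g <- u) X g = 0 by rewrite sumrB -sum_over_u // -sum_over_u // e subrr.
case: hC => _ _ _ direct g sg.
have /eqP := direct u X (undup_uniq _) CX sX g (su _ sg).
by rewrite /X sg subr_eq0 => /eqP.
Qed.

End DirectDecomposition.

Definition rad (R : pzSemiRingType) (I : R -> Prop) (a : R) : Prop :=
  exists n : nat, I (a ^+ n.+1).

Section GradedRing.
Variables (G : groupType) (R : comPzRingType) (Rg : G -> R -> Prop).
Hypothesis hR : ring_grading Rg.
Let hRd : direct_decomposition Rg := hR.1.

Lemma homogM g h a b : Rg g a -> Rg h b -> Rg (g * h)%g (a * b).
Proof. by case: hR => _; apply. Qed.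

Lemma homR_mul a b : homR Rg a -> homR Rg b -> homR Rg (a * b).
Proof. by move=> [g ha] [h hb]; exists (g * h)%g; apply: homogM. Qed.

Lemma homR_exp a n : homR Rg a -> homR Rg (a ^+ n.+1).
Proof.
move=> [g ha]; elim: n => [|n [h hn]]; first by exists g; rewrite expr1.
by exists (g * h)%g; rewrite exprS; apply: homogM.
Qed.

Section Ideal.
Variable I : R -> Prop.
Hypothesis iI : ideal I.

Lemma ideal0 : I 0. Proof. by case: iI. Qed.
Lemma idealD x y : I x -> I y -> I (x + y). Proof. by case: iI => _ hD _; apply: hD. Qed.
Lemma idealMl r x : I x -> I (r * x). Proof. by case: iI => _ _ hM; apply: hM. Qed.
Lemma idealMr r x : I x -> I (x * r). Proof. by rewrite mulrC; apply: idealMl. Qed.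

Lemma ideal_sum (T : Type) (l : seq T) (P : pred T) (F : T -> R) :
  (forall i, P i -> I (F i)) -> I (\sum_(i <- l | P i) F i).
Proof. exact: (big_ind I ideal0 idealD). Qed.

Lemma rad0 : rad I 0.
Proof. by exists 0%N; rewrite expr1; apply: ideal0. Qed.

Lemma radD a b : rad I a -> rad I b -> rad I (a + b).
Proof.
move=> [na ha] [nb hb]; exists (na + nb)%N; rewrite exprDn.
apply: ideal_sum => i _; rewrite -mulr_natl; apply: idealMl.
case: (leqP nb.+1 i) => hi; first by rewrite -(subnKC hi) exprD; apply/idealMl/idealMr.
have -> : ((na + nb).+1 - i = na.+1 + (nb - i))%N by lia.
by rewrite exprD -mulrA; apply: idealMr.
Qed.

Lemma radMl a b : rad I b -> rad I (a * b).
Proof. by move=> [n hn]; exists n; rewrite exprMn; apply: idealMl. Qed.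

Lemma rad_exp a n : rad I (a ^+ n.+1) -> rad I a.
Proof. by move=> [k hk]; exists (n.+1 * k.+1).-1; rewrite prednK // exprM. Qed.

Lemma Gr_sum_homog (l : seq (G * R)) :
  (forall i, i \in l -> Rg i.1 i.2 /\ rad I i.2) -> Gr Rg I (\sum_(i <- l) i.2).
Proof.
move=> hl; have [s [x [us Cx ->]]] := homog_regroup hRd rad0 radD hl.
by exists s, x; split => // g; [case: (Cx g) | move=> _; case: (Cx g)].
Qed.

Lemma Gr_homog a : homR Rg a -> rad I a -> Gr Rg I a.
Proof.
move=> [d ha] ra; have := @Gr_sum_homog [:: (d, a)]; rewrite big_seq1; apply.
by move=> i; rewrite inE => /eqP ->.
Qed.

Lemma Gr_decomp r : Gr Rg I r -> exists l : seq (G * R),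
  (forall i, i \in l -> Rg i.1 i.2 /\ rad I i.2) /\ r = \sum_(i <- l) i.2.
Proof.
move=> [s [x [_ Cx -> rx]]]; exists [seq (g, x g) | g <- s]; split; last by rewrite big_map.
by move=> i /mapP[g sg ->]; split; [apply: Cx | apply: rx].
Qed.

Lemma Gr_ideal : ideal (Gr Rg I).
Proof.
split.
- by have := @Gr_sum_homog [::]; rewrite big_nil; apply.
- move=> x y /Gr_decomp[l1 [h1 ->]] /Gr_decomp[l2 [h2 ->]].
  by rewrite -big_cat; apply: Gr_sum_homog => i; rewrite mem_cat => /orP[]; auto.
- move=> r x /Gr_decomp[l [hl ->]].
  case: hRd => _ _ decomp _; have [t [y [_ Cy ->]]] := decomp r.
  pose L := [seq ((g * i.1)%g, y g * i.2) | g <- t, i <- l].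
  have -> : (\sum_(g <- t) y g) * \sum_(i <- l) i.2 = \sum_(j <- L) j.2.
    rewrite big_allpairs_dep mulr_suml; apply: eq_bigr => g _.
    by rewrite mulr_sumr.
  apply: Gr_sum_homog => _ /allpairsP[[g i] [_ li ->]] /=.
  by have [Ci ri] := hl _ li; split; [apply: homogM | apply: radMl].
Qed.

Lemma Gr_graded : graded_ideal Rg (Gr Rg I).
Proof.
split; first exact: Gr_ideal.
move=> r [s [x [us Cx -> rx]]].
exists s, (fun g => if g \in s then x g else 0); split => //; last first.
  by apply: eq_big_seq => g ->.
move=> g; case: ifP => sg; last by split; [apply: homog0 | case: Gr_ideal].
by split => //; apply: Gr_homog; [exists g | apply: rx].
Qed.

Lemma rad_of_Gr_homog a : homR Rg a -> Gr Rg I a -> rad I a.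
Proof.
move=> [d ha] [s [x [us Cx e rx]]].
pose y g := if g == d then a else 0.
have Cy g : Rg g (y g) by rewrite /y; case: eqP => [->|_] //; apply: homog0.
have ey : \sum_(g <- [:: d]) y g = \sum_(g <- s) x g by rewrite big_seq1 /y eqxx.
have := homog_components_unique hRd (isT : uniq [:: d]) us Cy Cx ey (mem_head _ _).
by rewrite /y eqxx; case: ifP => sd ->; [apply: rx | apply: rad0].
Qed.

Lemma Gr_homog_exp a n : homR Rg a -> Gr Rg I (a ^+ n.+1) -> Gr Rg I a.
Proof.
move=> ha /(rad_of_Gr_homog (homR_exp n ha)) /rad_exp; exact: Gr_homog.
Qed.

End Ideal.

Lemma sub_Gr I : graded_ideal Rg I -> forall r, I r -> Gr Rg I r.
Proof.
move=> [_ gI] r /gI[s [x [us Cx ->]]]; exists s, x; split => // g.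
  by case: (Cx g).
by move=> _; exists 0%N; rewrite expr1; case: (Cx g).
Qed.

Section Prime.
Variable p : R -> Prop.
Hypothesis pp : graded_prime_ideal Rg p.

Lemma prime_rad_homog a : homR Rg a -> rad p a -> p a.
Proof.
case: pp => _ _ prime ha [n]; elim: n => [|n IH]; first by rewrite expr1.
rewrite exprS => h; have [//|] := prime _ _ ha (homR_exp n ha) h; exact: IH.
Qed.

Lemma Gr_sub_prime (I : R -> Prop) : (forall r, I r -> p r) -> forall r, Gr Rg I r -> p r.
Proof.
move=> Ip r [s [x [_ Cx -> rx]]]; have [[ip _] _ _] := pp.
rewrite big_seq; apply: ideal_sum => // g /rx[n hn].
by apply: prime_rad_homog; [exists g | exists n; apply: Ip].
Qed.

Lemma Gr_prime r : Gr Rg p r <-> p r.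
Proof.
split; first exact: Gr_sub_prime.
by have [gp _ _] := pp; apply: sub_Gr => //; case: gp.
Qed.

Lemma prime_quasi_primary : graded_quasi_primary_ideal Rg p.
Proof.
have [gp proper_p prime] := pp; split => // a b ha hb /prime[] // pab;
  [left | right]; exact/Gr_prime.
Qed.

End Prime.

Definition ideal_add_mul (A : R -> Prop) (c : R) : R -> Prop :=
  fun x => exists p r, A p /\ x = p + r * c.

Lemma ideal_add_mul_sub A c : ideal A -> forall x, A x -> ideal_add_mul A c x.
Proof. by move=> iA x Ax; exists x, 0; rewrite mul0r addr0. Qed.

Lemma ideal_add_mul_ideal A c : ideal A -> ideal (ideal_add_mul A c).
Proof.
move=> iA; split.
- exact: ideal_add_mul_sub (ideal0 iA).
- move=> _ _ [p1 [r1 [A1 ->]]] [p2 [r2 [A2 ->]]]; exists (p1 + p2), (r1 + r2).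
  by split; [apply: idealD | rewrite mulrDl addrACA].
- move=> r _ [p1 [r1 [A1 ->]]]; exists (r * p1), (r * r1).
  by split; [apply: idealMl | rewrite mulrDr mulrA].
Qed.

Lemma ideal_add_mul_graded A c : graded_ideal Rg A -> homR Rg c ->
  graded_ideal Rg (ideal_add_mul A c).
Proof.
move=> [iA gA] [d hc]; have iAc := ideal_add_mul_ideal c iA.
split => // _ [p [r [/gA[s [xp [us Cp ->]]] ->]]].
case: hRd => _ _ decomp _; have [u [y [_ Cy ->]]] := decomp r.
pose l := [seq (g, xp g) | g <- s] ++ [seq ((g * d)%g, y g * c) | g <- u].
have hl i : i \in l -> Rg i.1 i.2 /\ ideal_add_mul A c i.2.
  rewrite mem_cat => /orP[] /mapP[g _ ->] /=.
    by have [Cg Ag] := Cp g; split => //; apply: ideal_add_mul_sub.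
  by split; [apply: homogM | exists 0, (y g); rewrite add0r; split => //; apply: ideal0].
have [t [z [ut Cz ez]]] := homog_regroup hRd (ideal0 iAc) (idealD iAc) hl.
by exists t, z; split => //; rewrite -ez big_cat !big_map mulr_suml.
Qed.

Section PrimeAvoidance.
Local Open Scope classical_set_scope.
Variables (I S : R -> Prop).
Hypotheses (gI : graded_ideal Rg I) (S_mul : forall a b, S a -> S b -> S (a * b))
  (S_I : forall s, S s -> ~ I s).

Definition avoiding (A : R -> Prop) : Prop :=
  [/\ graded_ideal Rg A, I `<=` A & forall s, S s -> ~ A s].

(* Zorn's lemma needs a property of the empty chain, so the empty set is admitted too. *)
Lemma avoiding_bigcup (F : set (R -> Prop)) :
  (forall X, F X -> X = set0 \/ avoiding X) -> total_on F subset ->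
  (exists2 X, F X & avoiding X) -> avoiding (\bigcup_(X in F) X).
Proof.
move=> FP tot [A0 FA0 [[iA0 _] IA0 _]].
have avF X x : F X -> X x -> avoiding X by move=> /FP[-> //|].
have iF X x : F X -> X x -> ideal X by move=> FX /(avF _ _ FX)[[]].
split; first split; first split.
- by exists A0 => //; apply: ideal0.
- move=> x y [A FA Ax] [B FB By]; have [AB|BA] := tot A B FA FB.
  + by exists B => //; apply: (idealD (iF _ _ FB By)) => //; apply: AB.
  + by exists A => //; apply: (idealD (iF _ _ FA Ax)) => //; apply: BA.
- by move=> r x [A FA Ax]; exists A => //; apply: (idealMl (iF _ _ FA Ax)).
- move=> x [A FA Ax]; have [[_ gA] _ _] := avF _ _ FA Ax.
  have [s [y [us Cy ->]]] := gA x Ax; exists s, y; split => // g.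
  by have [Cg Ag] := Cy g; split => //; exists A.
- by move=> r Ir; exists A0 => //; apply: IA0.
- by move=> s Ss [A FA As]; have [_ _ SA] := avF _ _ FA As; apply: SA Ss As.
Qed.

Lemma maximal_avoiding_prime A : (exists s0, S s0) -> avoiding A ->
  (forall B, A `<` B -> ~ avoiding B) -> graded_prime_ideal Rg A.
Proof.
move=> [s0 Ss0] [gA IA SA] maxA; have iA : ideal A by case: gA.
split => //; first by exists s0; apply: SA.
have meets_S c : homR Rg c -> ~ A c -> exists s p r, [/\ S s, A p & s = p + r * c].
  move=> hc Ac; apply: contrapT => noS; apply: (maxA (ideal_add_mul A c)).
    split; first exact: ideal_add_mul_sub.
    move=> sub; apply: Ac; apply: sub; exists 0, 1.
    by rewrite mul1r add0r; split => //; apply: ideal0.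
  split; [exact: ideal_add_mul_graded | by move=> r /IA; apply: ideal_add_mul_sub |].
  by move=> s Ss [p [r [Ap e]]]; apply: noS; exists s, p, r.
move=> a b ha hb Aab.
have [Aa|Aa] := pselect (A a); first by left.
have [Ab|Ab] := pselect (A b); first by right.
have [s1 [p1 [r1 [S1 A1 e1]]]] := meets_S a ha Aa.
have [s2 [p2 [r2 [S2 A2 e2]]]] := meets_S b hb Ab.
case: (SA _ (S_mul S1 S2)).
have -> : s1 * s2 = p1 * s2 + p2 * (r1 * a) + (r1 * r2) * (a * b) by rewrite e1 e2; ring.
by apply: (idealD iA); [apply: (idealD iA); apply: idealMr | apply: idealMl].
Qed.

Lemma graded_prime_avoidance : (exists s0, S s0) ->
  exists p, [/\ graded_prime_ideal Rg p, I `<=` p & forall s, S s -> ~ p s].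
Proof.
move=> S0; have iI : ideal I by case: gI.
have [A [avA maxA]] : exists A, (A = set0 \/ avoiding A) /\
    forall B, A `<` B -> ~ (B = set0 \/ avoiding B).
  apply: Zorn_bigcup => F FP tot.
  have [Fav|noav] := pselect (exists2 X, F X & avoiding X).
    by right; apply: avoiding_bigcup.
  left; rewrite -subset0 => x [X FX Xx].
  by case: (FP X FX) => [X0|avX]; [rewrite X0 in Xx | case: noav; exists X].
have avI : avoiding I by split.
have {}avA : avoiding A.
  case: avA => // A0; case: (maxA I); last by right.
  by rewrite A0; split => // sub; apply: (sub 0); apply: ideal0.
have [_ IA SA] := avA; exists A; split => //.
by apply: maximal_avoiding_prime => // B AB avB; apply: (maxA B AB); right.
Qed.

End PrimeAvoidance.

End GradedRing.

Lemma in_phi_image_sep (G : groupType) (R : comPzRingType) (M : lmodType R)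
    (Rg : G -> R -> Prop) (F F' : (M -> Prop) -> Prop) (C : (R -> Prop) -> Prop) :
  (forall Q, F' Q <-> F Q /\ C (phi Rg Q)) ->
  forall p, in_phi_image Rg F' p <-> in_phi_image Rg F p /\ C p.
Proof.
move=> eF p; split.
- move=> [Q [/eF[FQ CQ] eQ]]; have <- : phi Rg Q = p by apply/predeqP.
  by split=> //; exists Q.
- move=> [[Q [FQ eQ]] Cp]; have eQp : phi Rg Q = p by apply/predeqP.
  by exists Q; split=> //; apply/eF; rewrite eQp.
Qed.

Section GradedModule.
Variables (G : groupType) (R : comPzRingType) (M : lmodType R).
Variables (Rg : G -> R -> Prop) (Mg : G -> M -> Prop).
Hypotheses (hR : ring_grading Rg) (hM : module_grading Rg Mg).
Let hRd : direct_decomposition Rg := hR.1.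
Let hMd : direct_decomposition Mg := hM.1.

Lemma homogZ g h a m : Rg g a -> Mg h m -> Mg (g * h)%g (a *: m).
Proof. by case: hM => _; apply. Qed.

Lemma scale_homog_closed (X : M -> Prop) c : X 0 -> (forall x y, X x -> X y -> X (x + y)) ->
  (forall m, homM Mg m -> X (c *: m)) -> forall m, X (c *: m).
Proof.
move=> X0 XD Xc m; case: hMd => _ _ decomp _; have [s [x [_ Cx ->]]] := decomp m.
by rewrite scaler_sumr; apply: big_ind => // g _; apply: Xc; exists g.
Qed.

Section Submodule.
Variable Q : M -> Prop.
Hypothesis sQ : submodule Q.

Lemma submod0 : Q 0. Proof. by case: sQ. Qed.
Lemma submodD x y : Q x -> Q y -> Q (x + y). Proof. by case: sQ => _ hD _; apply: hD. Qed.
Lemma submodZ r x : Q x -> Q (r *: x). Proof. by case: sQ => _ _ hZ; apply: hZ. Qed.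

Lemma colon_ideal : ideal (colon Q).
Proof.
split.
- by move=> m; rewrite scale0r; apply: submod0.
- by move=> x y hx hy m; rewrite scalerDl; apply: submodD.
- by move=> r x hx m; rewrite -scalerA; apply: submodZ.
Qed.

Lemma Ann_sub_colon r : Ann M r -> colon Q r.
Proof. by move=> Ar m; rewrite Ar; apply: submod0. Qed.

End Submodule.

(* A homogeneous component x_g of r in (Q : M) sends M_h into Q because x_g M_h is
   the g h-component of r M_h, which lies in the graded submodule Q. *)
Lemma colon_graded Q : graded_submodule Mg Q -> graded_ideal Rg (colon Q).
Proof.
move=> [sQ gQ]; split; first exact: colon_ideal.
move=> r Qr; case: hRd => _ _ decomp _; have [s [x [us Cx er]]] := decomp r.
have colon_comp g : g \in s -> colon Q (x g).
  move=> sg; apply: scale_homog_closed (submod0 sQ) (submodD sQ) _ => m [h hm].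
  have [u [y [uu Cy ey]]] := gQ _ (Qr m).
  pose X k := x (k * h^-1)%g *: m.
  have CX k : Mg k (X k) by have := homogZ (Cx (k * h^-1)%g) hm; rewrite mulgVK.
  have us' : uniq [seq (g' * h)%g | g' <- s] by rewrite map_inj_uniq // => ? ? /mulIg.
  have eX : \sum_(k <- [seq (g' * h)%g | g' <- s]) X k = \sum_(k <- u) y k.
    by rewrite -ey big_map er scaler_suml; apply: eq_bigr => g' _; rewrite /X mulgK.
  have := homog_components_unique hMd us' uu CX (fun k => (Cy k).1) eX (map_f _ sg).
  rewrite /X mulgK => ->; case: ifP => _; [exact: (Cy _).2 | exact: submod0].
exists s, (fun g => if g \in s then x g else 0); split => //; last first.
  by rewrite er; apply: eq_big_seq => g ->.
move=> g; case: ifP => sg; first by split; [apply: Cx | apply: colon_comp].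
by split; [apply: homog0 | apply: (ideal0 (colon_ideal sQ))].
Qed.

Lemma GrM_submodule Q : submodule (GrM Rg Mg Q).
Proof.
split.
- by move=> P [[sP _] _ _] _; apply: (submod0 sP).
- move=> x y hx hy P hP QP; have [[sP _] _ _] := hP.
  by apply: (submodD sP); [apply: hx | apply: hy].
- by move=> r x hx P hP QP; have [[sP _] _ _] := hP; apply: (submodZ sP); apply: hx.
Qed.

(* If not, avoidance yields a graded prime p >= (Q : M) missing all powers of c, and the
   primeful property a graded prime submodule P >= Q with (P : M) = p; but c M <= Gr_M(Q) <= P. *)
Lemma Gr_colon_of_GrM Q c : graded_submodule Mg Q -> graded_primeful Rg Mg Q -> homR Rg c ->
  (forall m, GrM Rg Mg Q (c *: m)) -> Gr Rg (colon Q) c.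
Proof.
move=> gQ pfQ hc cM; apply: contrapT => notGr.
have iC : ideal (colon Q) by case: (colon_graded gQ).
pose S z := exists n, z = c ^+ n.+1.
have S_mul a b : S a -> S b -> S (a * b).
  by move=> [n ->] [k ->]; exists (n + k).+1; rewrite -exprD addSn addnS.
have S_colon s : S s -> ~ colon Q s.
  by move=> [n ->] hn; apply: notGr; apply: (Gr_homog hR iC hc); exists n.
have [p [pp Cp Sp]] := graded_prime_avoidance hR (colon_graded gQ) S_mul S_colon
  (ex_intro _ _ (ex_intro _ 0%N erefl)).
have [P [pP QP eP]] := pfQ p pp Cp.
by apply: (Sp c); [exists 0%N; rewrite expr1 | apply/eP => m; apply: cM].
Qed.

Lemma Gr_colon_neq1 Q : graded_submodule Mg Q -> proper_submodule Q -> ~ Gr Rg (colon Q) 1.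
Proof.
move=> gQ [m Qm]; have S_mul (a b : R) : a = 1 -> b = 1 -> a * b = 1 by move=> -> ->; rewrite mulr1.
have S_colon s : s = 1 -> ~ colon Q s by move=> -> /(_ m); rewrite scale1r.
have [p [pp Cp Sp]] :=
  graded_prime_avoidance hR (colon_graded gQ) S_mul S_colon (ex_intro _ 1 erefl).
by move=> /(Gr_sub_prime hR pp Cp); apply: Sp.
Qed.

Lemma Gr_colon_prime Q : qpSpec Rg Mg Q -> forall a b, homR Rg a -> homR Rg b ->
  Gr Rg (colon Q) (a * b) -> Gr Rg (colon Q) a \/ Gr Rg (colon Q) b.
Proof.
move=> [[gQ _ qpQ] pfQ] a b ha hb Gab.
have iC : ideal (colon Q) by case: (colon_graded gQ).
have [n abn] := rad_of_Gr_homog hR iC (homR_mul hR ha hb) Gab.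
have [Ga|nGa] := pselect (Gr Rg (colon Q) a); [by left | right].
suff Gbn : Gr Rg (colon Q) (b ^+ n.+1) by apply: (Gr_homog_exp hR iC hb Gbn).
apply: Gr_colon_of_GrM => //; first exact: homR_exp.
apply: scale_homog_closed => [||m hm]; [exact: submod0 (GrM_submodule Q) |
  exact: submodD (GrM_submodule Q) |].
have hbm : homM Mg (b ^+ n.+1 *: m).
  by case: hm (homR_exp hR n hb) => [h hm] [k hk]; exists (k * h)%g; apply: homogZ.
have Qabm : Q (a ^+ n.+1 *: (b ^+ n.+1 *: m)) by rewrite scalerA -exprMn; apply: abn.
have [Gan|//] := qpQ _ _ (homR_exp hR n ha) hbm Qabm.
by case: nGa; apply: (Gr_homog_exp hR iC ha Gan).
Qed.

Lemma phi_SpecRbar Q : qpSpec Rg Mg Q -> SpecRbar M Rg (phi Rg Q).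
Proof.
move=> qQ; have [[gQ pQ _] _] := qQ; have [sQ _] := gQ.
split; last by move=> r /(Ann_sub_colon sQ); exact: sub_Gr (colon_graded gQ) r.
split; first exact: (Gr_graded hR (colon_ideal sQ)).
  by exists 1; apply: Gr_colon_neq1.
exact: Gr_colon_prime.
Qed.

Lemma in_phi_image_qpSpec : graded_quasi_primaryful Rg Mg ->
  forall p, in_phi_image Rg (qpSpec Rg Mg) p <-> SpecRbar M Rg p.
Proof.
move=> qpf p; split.
  move=> [Q [qQ eQ]]; have <- : phi Rg Q = p by apply/predeqP.
  exact: phi_SpecRbar.
move=> [pp Ann_p]; have [_ [r nr] _] := pp.
case: qpf => [M0 | [_ qpf]]; first by case: nr; apply: Ann_p => m; apply: M0.
have [Q [qQ e]] := qpf p (prime_quasi_primary hR pp) Ann_p.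
by exists Q; split => // s; apply: iff_trans (e s) (Gr_prime hR pp s).
Qed.

End GradedModule.

Theorem theorem3p12 (G : groupType) (R : comPzRingType) (M : lmodType R)
  (Rg : G -> R -> Prop) (Mg : G -> M -> Prop) :
  ring_grading Rg -> module_grading Rg Mg ->
  graded_quasi_primaryful Rg Mg ->
  forall K : M -> Prop, graded_submodule Mg K ->
    (forall p : R -> Prop,
        in_phi_image Rg (qpV Rg Mg K) p <->
        VRbar M Rg (Gr Rg (colon K)) p) /\
    (forall p : R -> Prop,
        in_phi_image Rg (fun Q => qpSpec Rg Mg Q /\ ~ qpV Rg Mg K Q) p <->
        (SpecRbar M Rg p /\ ~ VRbar M Rg (Gr Rg (colon K)) p)).
Proof.
move=> hR hM qpf K _; pose above_GrK (p : R -> Prop) := forall r, Gr Rg (colon K) r -> p r.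
have qpV_sep Q : qpV Rg Mg K Q <-> qpSpec Rg Mg Q /\ above_GrK (phi Rg Q) by [].
have qpV_compl_sep Q : qpSpec Rg Mg Q /\ ~ qpV Rg Mg K Q <->
    qpSpec Rg Mg Q /\ ~ above_GrK (phi Rg Q).
  by split=> -[qQ nV]; split=> // V; apply: nV; [split | case: V].
have imV := in_phi_image_sep qpV_sep.
have imC := in_phi_image_sep (C := fun q => ~ above_GrK q) qpV_compl_sep.
have imS := in_phi_image_qpSpec hR hM qpf.
by split=> p; move: (imS p) (imV p) (imC p); rewrite /VRbar -/(above_GrK p); tauto.
Qed.
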